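(* Let $(X_1,\dots,X_n)$ be drawn from a product distribution $\mu$. For any $k$-pass streaming algorithm $\mathsf{M}$ on this stream, $$MIC(\mathsf{M},\mu)\ge\sum_{i=1}^k\sum_{j=1}^n\sum_{\ell=1}^j\mathrm I\big(\mathsf{M}_{(i,j)};X_\ell\mid\mathsf{M}_{(\le i,\ell-1)},\mathsf{M}_{(\le i-1,j)}\big)\ge MIC_{cond}(\mathsf{M},\mu).$$ Consequently $MIC_{cond}(\mathsf{M},\mu)\le ksn$, where $s$ is the number of bits of memory used by $\mathsf{M}$.
   Context: $\mathsf{M}$ may use private randomness (fresh independent randomness at each step). $\mathsf{M}_{(i,j)}$ is the memory state in pass $i$ after reading $j$ elements, $\mathsf{M}_{(1,0)}=\mathsf{M}_0$ is the start state, $\mathsf{M}_{(i+1,0)}=\mathsf{M}_{(i,n)}$, $\mathsf{M}_{(\le i,j)}=(\mathsf{M}_{(1,j)},\dots,\mathsf{M}_{(i,j)})$. $MIC(\mathsf{M},\mu)=\sum_{i=1}^{k}\sum_{j=1}^n\sum_{\ell=1}^{j}\mathrm I(\mathsf{M}_{(i,j)};X_\ell\mid \mathsf{M}_{(\le i,\ell-1)},\mathsf{M}_{(\le i-1,j)})+\sum_{i=1}^{k}\sum_{j=1}^n\sum_{\ell=j+1}^{n}\mathrm I(\mathsf{M}_{(i,j)};X_\ell\mid \mathsf{M}_{(\le i-1,\ell-1)},\mathsf{M}_{(\le i-1,j)})$. With $\mathsf{M}_i=\mathsf{M}_{(i,n)}$ for $i\ge1$ and $\mathsf{M}_{<k}=(\mathsf{M}_0,\dots,\mathsf{M}_{k-1})$,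 $MIC_{cond}(\mathsf{M},\mu)=\sum_{j=1}^n\sum_{\ell=1}^j\mathrm I(\mathsf{M}_{(\le k,j)};X_\ell\mid\mathsf{M}_{<k},\mathsf{M}_{(\le k,\ell-1)})$. *)

From HB Require Import structures.
From mathcomp Require Import all_boot all_order all_algebra.
From mathcomp Require Import all_classical all_reals all_analysis.
Set Implicit Arguments. Unset Strict Implicit. Unset Printing Implicit Defensive.
Import Order.TTheory GRing.Theory Num.Theory.
Local Open Scope ring_scope.

Section Info.
Variable R : realType.

Definition log2 (x : R) : R := ln x / ln 2.

Variable Omega : finType.
Variable P : Omega -> R.

Definition prob (E : pred Omega) : R := \sum_(w | E w) P w.

(* Conditional mutual information I(U ; V | W) of random variables
   U, V, W defined on the finite probability space (Omega, P):
     E_w [ log2 ( p(u,v,w) p(w) / (p(u,w) p(v,w)) ) ]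
   evaluated at (u,v,w) = (U w, V w, W w).                            *)
Definition cmi (TU TV TW : eqType) (U : Omega -> TU) (V : Omega -> TV)
    (W : Omega -> TW) : R :=
  \sum_(w : Omega) P w * log2
    (prob [pred w' | [&& U w' == U w, V w' == V w & W w' == W w]]
       * prob [pred w' | W w' == W w]
     / (prob [pred w' | (U w' == U w) && (W w' == W w)]
          * prob [pred w' | (V w' == V w) && (W w' == W w)])).
End Info.

(* The outcome space records the stream x = (X_1..X_n)
   (X_l is x (l-1)) and the whole memory trajectory: traj (i-1, j-1) is the
   memory state M_(i,j) in pass i after reading j elements (1 <= i <= k,
   1 <= j <= n).                                                      *)
Definition outcome (A S : finType) (k n : nat) :=
  ({ffun 'I_n -> A} * {ffun 'I_k * 'I_n -> S})%type.

Section Stream.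
Variables (A S : finType) (k n : nat) (m0 : S).

(* value of the trajectory at 0-based indices (i, j), m0 if out of range *)
Definition traj_at (f : {ffun 'I_k * 'I_n -> S}) (i j : nat) : S :=
  match insub i, insub j with
  | Some a, Some b => f (a, b)
  | _, _ => m0
  end.

(* mem w i j = M_(i,j), for 1 <= i <= k and 0 <= j <= n, with the
   conventions M_(1,0) = M_0 = m0 and M_(i+1,0) = M_(i,n).             *)
Definition mem (w : outcome A S k n) (i j : nat) : S :=
  if j == 0%N then (if (i <= 1)%N then m0 else traj_at w.2 (i - 2) (n - 1))
  else traj_at w.2 (i - 1) (j - 1).

Definition memEnd (w : outcome A S k n) (i : nat) : S :=
  if i == 0%N then m0 else mem w i n.

Definition memUpTo (w : outcome A S k n) (i j : nat) : seq S :=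
  [seq mem w i' j | i' <- iota 1 i].

Definition memBefore (w : outcome A S k n) : seq S :=
  [seq memEnd w i | i <- iota 0 k].

Variable R : realType.

(* mu l : law of X_(l+1); the stream law is the product of the mu l.
   T i j m x m' : probability that, in pass i+1, the algorithm moves from
   memory state m = M_(i+1,j) to m' = M_(i+1,j+1) upon reading x = X_(j+1)
   (fresh independent private randomness at every step).              *)
Definition joint (mu : 'I_n -> A -> R) (T : 'I_k -> 'I_n -> S -> A -> S -> R)
    (w : outcome A S k n) : R :=
  (\prod_(l < n) mu l (w.1 l)) *
  \prod_(p : 'I_k * 'I_n)
     T p.1 p.2 (mem w p.1.+1 p.2) (w.1 p.2) (w.2 p).

Definition is_distr (mu : A -> R) : Prop :=
  (forall a, 0 <= mu a) /\ \sum_a mu a = 1.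

Definition is_kernel (T : S -> A -> S -> R) : Prop :=
  forall m x, (forall m', 0 <= T m x m') /\ \sum_m' T m x m' = 1.

Variables (mu : 'I_n -> A -> R) (T : 'I_k -> 'I_n -> S -> A -> S -> R).

Local Notation P := (joint mu T).

Definition Xrv (l : 'I_n) (w : outcome A S k n) : A := w.1 l.

(* MIC(M, mu), with i = i'+1, j = j'+1, l = l'+1 *)
Definition MIC : R :=
  \sum_(i < k) \sum_(j < n) \sum_(l < n | (l <= j)%N)
     cmi P (fun w => mem w i.+1 j.+1) (Xrv l)
       (fun w => (memUpTo w i.+1 l, memUpTo w i j.+1))
  + \sum_(i < k) \sum_(j < n) \sum_(l < n | (j < l)%N)
     cmi P (fun w => mem w i.+1 j.+1) (Xrv l)
       (fun w => (memUpTo w i l, memUpTo w i j.+1)).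

Definition MIC_first : R :=
  \sum_(i < k) \sum_(j < n) \sum_(l < n | (l <= j)%N)
     cmi P (fun w => mem w i.+1 j.+1) (Xrv l)
       (fun w => (memUpTo w i.+1 l, memUpTo w i j.+1)).

Definition MIC_cond : R :=
  \sum_(j < n) \sum_(l < n | (l <= j)%N)
     cmi P (fun w => memUpTo w k j.+1) (Xrv l)
       (fun w => (memBefore w, memUpTo w k l)).
End Stream.

From Pilot Require Import Defs.
From HB Require Import structures.
From mathcomp Require Import all_boot all_order all_algebra.
From mathcomp Require Import all_classical all_reals all_analysis.
From mathcomp Require Import ring lra zify.
Import Order.TTheory GRing.Theory Num.Theory.
Local Open Scope ring_scope.

(* The joint law of the stream and of the memory trajectory is the product of the
   laws of the X_l and of one transition kernel per step.  Hence, if two outcomes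
   agree on the memory states bordering a segment of the stream, exchanging the
   segment together with the states inside it preserves the product of their weights.
   This cut-and-paste property makes what is read inside the segment conditionally
   independent of what is read outside, given the boundary states; summing out the
   kernels of later steps extends it to variables observed up to any given step.

   For fixed j and l, the chain rule over the passes, using such independences to
   add and later drop the end-of-pass states M_(<i), turns the sum over i of the
   MIC_first terms into I(M_(<=k,j), M_(<k), M_(<=k,l-1) ; X_l), which dominates
   the MIC_cond term.
   For fixed j, the past X_(<l), M_(<=k,<l) is independent of X_l given M_(<k) and
   M_(<=k,l-1), so conditioning on it only increases the MIC_cond terms, which then
   telescope to I(M_(<=k,j) ; X_(<=j), M_(<=k,<=j) | M_(<k)) <= H(M_(<=k,j)) <= k s.
   The first inequality is the nonnegativity of the second sum in MIC. *)

Set Implicit Arguments. Unset Strict Implicit. Unset Printing Implicit Defensive.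

Ltac case_eqs :=
  rewrite /= ?xpair_eqE ?eqseq_rcons ?xpair_eqE ?(inj_eq (@Some_inj _)) ?eqxx ?andbT;
  do ![case: (_ == _)] => //.

Section FiniteInformation.
Variables (R : realType) (Omega : finType) (P : Omega -> R).
Hypothesis P_ge0 : forall w, 0 <= P w.

Definition same_info (T1 T2 : eqType) (Z1 : Omega -> T1) (Z2 : Omega -> T2) :=
  forall w w', (Z1 w' == Z1 w) = (Z2 w' == Z2 w).

Definition cell_prob (TZ : eqType) (Z : Omega -> TZ) (w : Omega) : R :=
  prob P [pred w' | Z w' == Z w].

Definition entropy (TZ : eqType) (Z : Omega -> TZ) : R :=
  - \sum_w P w * log2 (cell_prob Z w).

Lemma prob_ge0 (E : pred Omega) : 0 <= prob P E.
Proof. exact: sumr_ge0. Qed.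

Lemma prob_gt0 (E : pred Omega) w : 0 < P w -> E w -> 0 < prob P E.
Proof.
move=> Pw Ew; apply: (lt_le_trans Pw); rewrite /prob (bigD1 w) //=.
by rewrite lerDl sumr_ge0.
Qed.

Lemma le_prob (E1 E2 : pred Omega) :
  (forall w, E1 w -> E2 w) -> prob P E1 <= prob P E2.
Proof.
move=> sub12; rewrite /prob [leLHS]big_mkcond [leRHS]big_mkcond /=.
by apply: ler_sum => w _; case: ifP => [/sub12 ->|_] //; case: ifP.
Qed.

Lemma cell_prob_gt0 (TZ : eqType) (Z : Omega -> TZ) w : 0 < P w -> 0 < cell_prob Z w.
Proof. by move=> Pw; apply: prob_gt0 Pw _; rewrite /= eqxx. Qed.

Lemma probM (E1 E2 : pred Omega) : prob P E1 * prob P E2 =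
  \sum_w1 \sum_w2 (if E1 w1 && E2 w2 then P w1 * P w2 else 0).
Proof.
rewrite /prob big_distrl big_mkcond /=; apply: eq_bigr => w1 _.
case: (E1 w1); last by rewrite big1.
by rewrite big_distrr big_mkcond /=; apply: eq_bigr => w2 _; case: (E2 w2).
Qed.

Lemma prob_divr_le1 (E : pred Omega) : prob P E / prob P E <= 1.
Proof.
have [->|E0] := eqVneq (prob P E) 0; first by rewrite mul0r.
by rewrite divff.
Qed.

Lemma ln2_gt0 : 0 < ln (2 : R).
Proof. by apply: ln_gt0; rewrite ltr1n. Qed.

Lemma log2M (x y : R) : 0 < x -> 0 < y -> log2 (x * y) = log2 x + log2 y.
Proof. by move=> x0 y0; rewrite /log2 lnM ?mulrDl. Qed.

Lemma log2V (x : R) : 0 < x -> log2 x^-1 = - log2 x.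
Proof. by move=> x0; rewrite /log2 lnV ?mulNr. Qed.

Lemma ler_log2 (x y : R) : 0 < x -> x <= y -> log2 x <= log2 y.
Proof.
move=> x0 xy; rewrite /log2 ler_pM2r ?invr_gt0 ?ln2_gt0 //.
by rewrite ler_ln // posrE (lt_le_trans x0).
Qed.

Lemma log2_exp2 (m : nat) : log2 ((2 ^ m)%:R : R) = m%:R.
Proof. by rewrite /log2 natrX lnXn // -[ln 2 *+ m]mulr_natl mulfK // gt_eqF // ln2_gt0. Qed.

Lemma gibbs_term (p q : R) : 0 < p -> 0 < q -> (p - q) / ln 2 <= p * log2 (p / q).
Proof.
move=> p0 q0; rewrite /log2 mulrA ler_pM2r ?invr_gt0 ?ln2_gt0 //.
have ln_le : ln (q / p) <= q / p - 1.
  have := @le_ln1Dx R (q / p - 1); rewrite addrCA subrr addr0; apply.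
  by rewrite ltrBrDl subrr divr_gt0.
have -> : p - q = p * (1 - q / p) by rewrite mulrBr mulr1 mulrCA divff ?gt_eqF ?mulr1.
rewrite -[p / q]invf_div lnV ?posrE ?divr_gt0 // ler_pM2l //; lra.
Qed.

Lemma weight_gt0 w : P w != 0 -> 0 < P w.
Proof. by rewrite lt_neqAle eq_sym P_ge0 andbT. Qed.

Lemma gibbs (Q : Omega -> R) :
  (forall w, 0 <= Q w) -> (forall w, 0 < P w -> 0 < Q w) ->
  (\sum_w P w - \sum_w Q w) / ln 2 <= \sum_w P w * log2 (P w / Q w).
Proof.
move=> Q_ge0 Q_gt0; rewrite -sumrB big_distrl; apply: ler_sum => w _ /=.
have [->|/weight_gt0 Pw] := eqVneq (P w) 0; last exact: gibbs_term (Q_gt0 _ Pw).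
by rewrite !mul0r sub0r mulNr oppr_le0 divr_ge0 // ltW // ln2_gt0.
Qed.

Lemma entropy_same_info (T1 T2 : eqType) (Z1 : Omega -> T1) (Z2 : Omega -> T2) :
  same_info Z1 Z2 -> entropy Z1 = entropy Z2.
Proof.
move=> Z12; congr (- _); apply: eq_bigr => w _; congr (_ * log2 _).
by apply: eq_bigl => w'; rewrite /= Z12.
Qed.

Section Cmi.
Variables (TU TV TC : eqType) (U : Omega -> TU) (V : Omega -> TV) (C : Omega -> TC).

Let UC w := (U w, C w).
Let VC w := (V w, C w).
Let UVC w := (U w, V w, C w).

Lemma cmi_cellE : cmi P U V C = \sum_w P w *
  log2 (cell_prob UVC w * cell_prob C w / (cell_prob UC w * cell_prob VC w)).
Proof.
apply: eq_bigr => w _; congr (_ * log2 (prob P _ * _ / (prob P _ * prob P _))).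
all: by apply/funext => w'; rewrite /= !xpair_eqE ?andbA.
Qed.

Lemma cmiE : cmi P U V C = entropy UC + entropy VC - entropy UVC - entropy C.
Proof.
rewrite cmi_cellE /entropy !opprK -!sumrN -!big_split /=; apply: eq_bigr => w _.
have [->|/weight_gt0 Pw] := eqVneq (P w) 0; first by rewrite !mul0r !oppr0 !addr0.
have cell_gt0 (TZ : eqType) (Z : Omega -> TZ) := cell_prob_gt0 Z Pw.
rewrite log2M ?log2V ?log2M ?(mulr_gt0, invr_gt0, cell_gt0) //; lra.
Qed.

Lemma sum_cond_indep_le : \sum_w P w * (cell_prob UC w * cell_prob VC w)
  / (cell_prob UVC w * cell_prob C w) <= \sum_w P w.
Proof.
pose a w := cell_prob UVC w; pose b w := cell_prob C w.
pose F w1 w2 w := if (UC w1 == UC w) && (VC w2 == VC w)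
  then P w * (P w1 * P w2) / (a w * b w) else 0.
have inner w1 w2 :
    \sum_w F w1 w2 w <= if C w2 == C w1 then P w1 * P w2 / b w1 else 0.
  have [C12|C12] := eqVneq (C w2) (C w1); last first.
    rewrite big1 // => w _; rewrite /F; case: ifP => // /andP[/eqP[_ Cw1] /eqP[_ Cw2]].
    by rewrite Cw1 Cw2 eqxx in C12.
  pose a12 := prob P [pred w | UVC w == (U w1, V w2, C w1)].
  have -> : \sum_w F w1 w2 w = a12 * (P w1 * P w2 / (a12 * b w1)).
    rewrite /a12 /prob big_distrl /= [RHS]big_mkcond; apply: eq_bigr => w _ /=.
    rewrite /F /UC /VC /UVC.
    have [[Uw Vw Cw]|neq] := eqVneq (U w, V w, C w) (U w1, V w2, C w1).
      rewrite Uw Vw Cw C12 !eqxx /= -mulrA.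
      by rewrite /a /b /cell_prob /UVC Uw Vw Cw.
    case: ifP => // /andP[/eqP[Uw Cw] /eqP[Vw _]].
    by rewrite -Uw -Vw -Cw eqxx in neq.
  have [->|a12_0] := eqVneq a12 0; first by rewrite mul0r divr_ge0 ?mulr_ge0 ?prob_ge0.
  by rewrite invfM mulrCA mulVKf.
apply: (@le_trans _ _ (\sum_w1 \sum_w2 if C w2 == C w1 then P w1 * P w2 / b w1 else 0)).
  rewrite (eq_bigr (fun w => \sum_w1 \sum_w2 F w1 w2 w)) => [|w _]; last first.
    rewrite mulrAC mulrC probM big_distrl; apply: eq_bigr => w1 _ /=.
    rewrite big_distrl; apply: eq_bigr => w2 _ /=.
    by rewrite /F; case: ifP => _; rewrite ?mul0r // mulrCA mulrA.
  rewrite exchange_big; apply: ler_sum => w1 _.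
  by rewrite exchange_big; apply: ler_sum => w2 _; apply: inner.
apply: ler_sum => w1 _; rewrite -big_mkcond /=.
rewrite (eq_bigr (fun w2 => P w1 / b w1 * P w2)) => [|w2 _]; last by rewrite mulrAC.
rewrite -big_distrr /= -mulrA; apply: ler_piMr => //.
by rewrite mulrC; apply: prob_divr_le1.
Qed.

Lemma cmi_ge0 : 0 <= cmi P U V C.
Proof.
pose Q w := P w * (cell_prob UC w * cell_prob VC w) / (cell_prob UVC w * cell_prob C w).
have Q_ge0 w : 0 <= Q w by rewrite /Q divr_ge0 ?mulr_ge0 ?prob_ge0.
have Q_gt0 w : 0 < P w -> 0 < Q w.
  by move=> Pw; rewrite /Q divr_gt0 ?mulr_gt0 ?cell_prob_gt0.
have -> : cmi P U V C = \sum_w P w * log2 (P w / Q w).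
  rewrite cmi_cellE; apply: eq_bigr => w _.
  have [->|/weight_gt0 Pw] := eqVneq (P w) 0; first by rewrite !mul0r.
  have cell_neq0 (TZ : eqType) (Z : Omega -> TZ) := gt_eqF (cell_prob_gt0 Z Pw).
  by congr (_ * log2 _); rewrite /Q; field; rewrite ?mulf_neq0 ?cell_neq0 ?gt_eqF.
apply: le_trans (gibbs Q_ge0 Q_gt0).
by rewrite divr_ge0 ?subr_ge0 ?sum_cond_indep_le // ltW // ln2_gt0.
Qed.

Lemma cmi_eq0_swap (swap : Omega -> Omega -> Omega) :
  (forall w1 w2, C w1 = C w2 -> [/\ C (swap w1 w2) = C w1, U (swap w1 w2) = U w2,
      V (swap w1 w2) = V w1, swap (swap w1 w2) (swap w2 w1) = w1
    & P (swap w1 w2) * P (swap w2 w1) = P w1 * P w2]) ->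
  cmi P U V C = 0.
Proof.
move=> swapP; rewrite cmi_cellE big1 // => w _.
have [->|/weight_gt0 Pw] := eqVneq (P w) 0; first by rewrite mul0r.
suff -> : cell_prob UVC w * cell_prob C w = cell_prob UC w * cell_prob VC w.
  by rewrite divff ?mulf_neq0 ?gt_eqF ?cell_prob_gt0 // /log2 ln1 mul0r mulr0.
pose phi (x : Omega * Omega) :=
  if C x.1 == C x.2 then (swap x.2 x.1, swap x.1 x.2) else x.
have phiK : involutive phi.
  move=> [x1 x2]; rewrite /phi /=.
  have [C12|C12] := eqVneq (C x1) (C x2); last by rewrite (negbTE C12).
  have [C21 _ _ swap21 _] := swapP x2 x1 (esym C12).
  have [C12' _ _ swap12 _] := swapP x1 x2 C12.
  by rewrite C21 C12' C12 eqxx swap21 swap12.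
rewrite !probM !pair_bigA (reindex_inj (inv_inj phiK)) /=.
apply: eq_bigr => -[x1 x2] _; rewrite /phi /= /UVC /UC /VC !xpair_eqE.
have [C12|C12] := eqVneq (C x1) (C x2); last first.
  case: (eqVneq (C x1) (C w)) => [C1w|_]; last by rewrite !andbF.
  by rewrite -C1w [C x2 == _]eq_sym (negbTE C12) !andbF.
have [-> -> -> _ ->] := swapP x2 x1 (esym C12); rewrite /=.
have [-> _ _ _ _] := swapP x1 x2 C12.
rewrite C12 mulrC.
by case: (U x1 == U w); case: (V x2 == V w); case: (C x2 == C w).
Qed.

End Cmi.

Lemma cmi_same_info (TU TV TC TU' TV' TC' : eqType) (U : Omega -> TU)
    (V : Omega -> TV) (C : Omega -> TC) (U' : Omega -> TU') (V' : Omega -> TV')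
    (C' : Omega -> TC') :
  same_info U U' -> same_info V V' -> same_info C C' -> cmi P U V C = cmi P U' V' C'.
Proof.
move=> UU' VV' CC'; rewrite !cmiE (entropy_same_info CC').
rewrite (@entropy_same_info _ _ (fun w => (U w, C w)) (fun w => (U' w, C' w)));
  last by move=> w w'; rewrite !xpair_eqE UU' CC'.
rewrite (@entropy_same_info _ _ (fun w => (V w, C w)) (fun w => (V' w, C' w)));
  last by move=> w w'; rewrite !xpair_eqE VV' CC'.
rewrite (@entropy_same_info _ _ (fun w => (U w, V w, C w))
  (fun w => (U' w, V' w, C' w))) //.
by move=> w w'; rewrite !xpair_eqE UU' VV' CC'.
Qed.

Lemma cmiC (TU TV TC : eqType) (U : Omega -> TU) (V : Omega -> TV) (C : Omega -> TC) :
  cmi P U V C = cmi P V U C.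
Proof.
rewrite !cmiE (@entropy_same_info _ _ (fun w => (U w, V w, C w)) (fun w => (V w, U w, C w))).
  by lra.
move=> ? ?; case_eqs.
Qed.

Lemma cmi_chainl (TU TD TV TC : eqType) (U : Omega -> TU) (D : Omega -> TD)
    (V : Omega -> TV) (C : Omega -> TC) :
  cmi P (fun w => (U w, D w)) V C = cmi P U V C + cmi P D V (fun w => (C w, U w)).
Proof.
rewrite !cmiE.
rewrite (@entropy_same_info _ _ (fun w => (D w, (C w, U w))) (fun w => ((U w, D w), C w)));
  last by move=> ? ?; case_eqs.
rewrite (@entropy_same_info _ _ (fun w => (V w, (C w, U w))) (fun w => (U w, V w, C w)));
  last by move=> ? ?; case_eqs.
rewrite (@entropy_same_info _ _ (fun w => (D w, V w, (C w, U w)))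
  (fun w => ((U w, D w), V w, C w))); last by move=> ? ?; case_eqs.
rewrite (@entropy_same_info _ _ (fun w => (C w, U w)) (fun w => (U w, C w)));
  last by move=> ? ?; case_eqs.
lra.
Qed.

Lemma cmi_chainr (TU TV TD TC : eqType) (U : Omega -> TU) (V : Omega -> TV)
    (D : Omega -> TD) (C : Omega -> TC) :
  cmi P U (fun w => (V w, D w)) C = cmi P U V C + cmi P U D (fun w => (C w, V w)).
Proof. by rewrite cmiC cmi_chainl cmiC (cmiC D). Qed.

Lemma cmi_const_eq0 (TU TV TC : eqType) (U : Omega -> TU) (V : Omega -> TV)
    (C : Omega -> TC) :
  (forall w w', U w = U w') -> cmi P U V C = 0.
Proof.
move=> U_const; rewrite cmiE.
rewrite (@entropy_same_info _ _ (fun w => (U w, C w)) C);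
  last by move=> w w'; rewrite xpair_eqE (U_const w' w) eqxx.
rewrite (@entropy_same_info _ _ (fun w => (U w, V w, C w)) (fun w => (V w, C w)));
  last by move=> w w'; rewrite !xpair_eqE (U_const w' w) eqxx.
lra.
Qed.

Lemma cmi_le_pairr (TU TV TD TC : eqType) (U : Omega -> TU) (V : Omega -> TV)
    (D : Omega -> TD) (C : Omega -> TC) :
  cmi P U V C <= cmi P U (fun w => (V w, D w)) C.
Proof. by rewrite cmi_chainr lerDl cmi_ge0. Qed.

Lemma cmi_chainl_swap (TU TD TV TC : eqType) (U : Omega -> TU) (D : Omega -> TD)
    (V : Omega -> TV) (C : Omega -> TC) :
  cmi P U V C + cmi P D V (fun w => (C w, U w)) =
  cmi P D V C + cmi P U V (fun w => (C w, D w)).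
Proof.
by rewrite -!cmi_chainl; apply: cmi_same_info => // ? ?; case_eqs.
Qed.

Lemma cmi_le_condl (TU TD TV TC : eqType) (U : Omega -> TU) (D : Omega -> TD)
    (V : Omega -> TV) (C : Omega -> TC) :
  cmi P D V C = 0 -> cmi P U V C <= cmi P U V (fun w => (C w, D w)).
Proof.
move=> DV_C; have := cmi_chainl_swap U D V C; rewrite DV_C add0r => <-.
by rewrite lerDl cmi_ge0.
Qed.

Lemma cmi_drop_cond (TU TD TV TC : eqType) (U : Omega -> TU) (D : Omega -> TD)
    (V : Omega -> TV) (C : Omega -> TC) :
  cmi P D V C = 0 -> cmi P D V (fun w => (C w, U w)) = 0 ->
  cmi P U V (fun w => (C w, D w)) = cmi P U V C.
Proof.
by move=> DV_C DV_CU; have := cmi_chainl_swap U D V C; rewrite DV_C DV_CU addr0 add0r.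
Qed.

Lemma entropy_le (T1 T2 : eqType) (Z1 : Omega -> T1) (Z2 : Omega -> T2) :
  (forall w w', Z1 w' == Z1 w -> Z2 w' == Z2 w) -> entropy Z2 <= entropy Z1.
Proof.
move=> Z21; rewrite lerN2; apply: ler_sum => w _.
have [->|/weight_gt0 Pw] := eqVneq (P w) 0; first by rewrite !mul0r.
rewrite ler_wpM2l // ler_log2 ?cell_prob_gt0 //.
by apply: le_prob => w'; apply: Z21.
Qed.

Lemma entropy_const (T : eqType) (t : T) : \sum_w P w = 1 -> entropy (fun=> t) = 0.
Proof.
move=> P1; rewrite /entropy big1 ?oppr0 // => w _.
have -> : cell_prob (fun=> t) w = 1 by rewrite -P1; apply: eq_bigl => w'; rewrite /= eqxx.
by rewrite /log2 ln1 mul0r mulr0.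
Qed.

Lemma cmi_le_entropy (TU TV TC : eqType) (U : Omega -> TU) (V : Omega -> TV)
    (C : Omega -> TC) :
  \sum_w P w = 1 -> cmi P U V C <= entropy U.
Proof.
move=> P1; have UC_ge0 := cmi_ge0 U C (fun=> tt).
rewrite cmiE entropy_const // in UC_ge0.
rewrite (@entropy_same_info _ _ (fun w => (U w, tt)) U) in UC_ge0; last by move=> ? ?; case_eqs.
rewrite (@entropy_same_info _ _ (fun w => (C w, tt)) C) in UC_ge0; last by move=> ? ?; case_eqs.
rewrite (@entropy_same_info _ _ (fun w => (U w, C w, tt)) (fun w => (U w, C w))) in UC_ge0;
  last by move=> ? ?; case_eqs.
have : entropy (fun w => (V w, C w)) <= entropy (fun w => (U w, V w, C w)).
  by apply: entropy_le => w w'; rewrite !xpair_eqE => /andP[/andP[_ ->] ->].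
by rewrite cmiE; lra.
Qed.

Lemma sum_div_cell_prob_le_card (F : finType) (Z : Omega -> F) :
  \sum_w P w / cell_prob Z w <= #|F|%:R.
Proof.
rewrite (partition_big Z xpredT) //= -sum1_card natr_sum; apply: ler_sum => z _.
rewrite (eq_bigr (fun w => P w / prob P [pred w | Z w == z])) => [|w /eqP <-] //.
by rewrite -big_distrl; apply: prob_divr_le1.
Qed.

Lemma entropy_le_log2_card (F : finType) (Z : Omega -> F) :
  \sum_w P w = 1 -> entropy Z <= log2 #|F|%:R.
Proof.
move=> P1.
have F_gt0 : (0 < #|F|)%N.
  case: (pickP (fun _ : Omega => true)) => [w _|P0]; first by apply/card_gt0P; exists (Z w).
  by move: P1; rewrite big_pred0 // => /eqP; rewrite eq_sym oner_eq0.
pose N : R := #|F|%:R; have N_gt0 : 0 < N by rewrite ltr0n.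
pose Q w := P w / (N * cell_prob Z w).
have Q_ge0 w : 0 <= Q w by rewrite /Q divr_ge0 ?mulr_ge0 ?prob_ge0 // ltW.
have Q_gt0 w : 0 < P w -> 0 < Q w by move=> Pw; rewrite /Q divr_gt0 ?mulr_gt0 ?cell_prob_gt0.
have Q_le1 : \sum_w Q w <= 1.
  rewrite (eq_bigr (fun w => N^-1 * (P w / cell_prob Z w))) => [|w _]; last first.
    by rewrite /Q invfM mulrCA.
  by rewrite -big_distrr ler_pdivrMl // mulr1 sum_div_cell_prob_le_card.
have := gibbs Q_ge0 Q_gt0.
rewrite [leRHS](eq_bigr (fun w => P w * log2 N + P w * log2 (cell_prob Z w))) => [|w _];
  last first.
  have [->|/weight_gt0 Pw] := eqVneq (P w) 0; first by rewrite !mul0r addr0.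
  rewrite /Q invf_div (mulrC (N * _)) mulVKf ?gt_eqF //.
  by rewrite log2M ?cell_prob_gt0 // mulrDr.
rewrite big_split /= -big_distrl /= P1 mul1r /entropy.
have : 0 <= (1 - \sum_w Q w) / ln 2 by rewrite divr_ge0 ?subr_ge0 // ltW // ln2_gt0.
lra.
Qed.

End FiniteInformation.

Lemma cmi_eq_law (R : realType) (Omega : finType) (P Q : Omega -> R)
    (TU TV TC : eqType) (U : Omega -> TU) (V : Omega -> TV) (C : Omega -> TC) :
  (forall g : Omega -> R,
     (forall w w', U w = U w' -> V w = V w' -> C w = C w' -> g w = g w') ->
     \sum_w P w * g w = \sum_w Q w * g w) ->
  cmi P U V C = cmi Q U V C.
Proof.
move=> PQ.
have prob_eq (E : pred Omega) :
    (forall w w', U w = U w' -> V w = V w' -> C w = C w' -> E w = E w') ->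
    prob P E = prob Q E.
  move=> E_UVC; rewrite /prob !big_mkcond /=.
  transitivity (\sum_w P w * (if E w then 1 else 0)).
    by apply: eq_bigr => w _; case: ifP; rewrite ?mulr1 ?mulr0.
  rewrite PQ => [|w w' Uw Vw Cw]; last by rewrite (E_UVC w w').
  by rewrite [RHS]big_mkcond; apply: eq_bigr => w _; case: ifP; rewrite ?mulr1 ?mulr0.
pose ratio (X : Omega -> R) w :=
  prob X [pred w' | [&& U w' == U w, V w' == V w & C w' == C w]] *
    prob X [pred w' | C w' == C w] /
  (prob X [pred w' | (U w' == U w) && (C w' == C w)] *
    prob X [pred w' | (V w' == V w) && (C w' == C w)]).
transitivity (\sum_w P w * log2 (ratio Q w)).
  apply: eq_bigr => w _; congr (_ * log2 (_ * _ / (_ * _)));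
    by apply: prob_eq => w1 w2 /= U12 V12 C12; rewrite ?U12 ?V12 ?C12.
by apply: (PQ (fun w => log2 (ratio Q w))) => w w' Uw Vw Cw; rewrite /ratio Uw Vw Cw.
Qed.

Section Streaming.
Variables (R : realType) (A S : finType) (k n : nat) (m0 : S).
Variables (mu : 'I_n -> A -> R) (T : 'I_k -> 'I_n -> S -> A -> S -> R).
Hypothesis mu_distr : forall l, is_distr (mu l).
Hypothesis T_kernel : forall i j, is_kernel (T i j).

Local Notation Om := (outcome A S k n).
Local Notation mem := (@Defs.mem A S k n m0).
Local Notation memUpTo := (@Defs.memUpTo A S k n m0).
Local Notation memEnd := (@Defs.memEnd A S k n m0).
Local Notation P := (joint m0 mu T).

Lemma card_S_gt0 : (0 < #|S|)%N.
Proof. by apply/card_gt0P; exists m0. Qed.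

Definition rank (p : 'I_k * 'I_n) : nat := (p.1 * n + p.2)%N.

Lemma rank_inj : injective rank.
Proof.
move=> [a b] [a' b'] /= eq_ab.
have n_gt0 : (0 < n)%N by apply: leq_ltn_trans (ltn_ord b).
have eq_b : (b : nat) = b'.
  by move: (congr1 (modn^~ n) eq_ab); rewrite /rank /= !modnMDl !modn_small.
have eq_a : (a : nat) = a'.
  by move: (congr1 (divn^~ n) eq_ab); rewrite /rank /= !divnMDl // !divn_small ?addn0.
by congr (_, _); apply: val_inj.
Qed.

Lemma rank_onto m : (m < k * n)%N -> exists p, rank p = m.
Proof.
move=> m_lt.
have n_gt0 : (0 < n)%N by case: n m_lt => //; rewrite muln0.
have q_lt : (m %/ n < k)%N by rewrite ltn_divLR.
have r_lt : (m %% n < n)%N by rewrite ltn_pmod.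
by exists (Ordinal q_lt, Ordinal r_lt); rewrite /rank /= -divn_eq.
Qed.

Definition depends_on_prefix (TZ : Type) (m : nat) (f : Om -> TZ) :=
  forall w w' : Om, w.1 = w'.1 ->
    (forall p, (rank p < m)%N -> w.2 p = w'.2 p) -> f w = f w'.

Lemma depends_on_prefixW (TZ : Type) m m' (f : Om -> TZ) :
  (m <= m')%N -> depends_on_prefix m f -> depends_on_prefix m' f.
Proof.
move=> le_mm' f_dep w w' eq1 eq2; apply: f_dep => // p lt_pm.
by apply: eq2; apply: leq_trans le_mm'.
Qed.

Lemma depends_on_prefix_pair (T1 T2 : Type) m (f : Om -> T1) (g : Om -> T2) :
  depends_on_prefix m f -> depends_on_prefix m g ->
  depends_on_prefix m (fun w => (f w, g w)).
Proof. by move=> f_dep g_dep w w' eq1 eq2; rewrite (f_dep w w') // (g_dep w w'). Qed.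

Lemma depends_on_prefix_map (T1 : Type) (I : eqType) m (s : seq I) (f : I -> Om -> T1) :
  (forall i, i \in s -> depends_on_prefix m (f i)) ->
  depends_on_prefix m (fun w => [seq f i w | i <- s]).
Proof.
move=> f_dep w w' eq1 eq2; apply/eq_in_map => i i_s.
exact: f_dep.
Qed.

Lemma traj_at_ext (f f' : {ffun 'I_k * 'I_n -> S}) a b :
  (forall (x : 'I_k) (y : 'I_n), val x = a -> val y = b -> f (x, y) = f' (x, y)) ->
  traj_at m0 f a b = traj_at m0 f' a b.
Proof.
move=> eq_ff'; rewrite /traj_at; case: insubP => [x _ ex|] //.
by case: insubP => [y _ ey|] //; apply: eq_ff'.
Qed.

Lemma traj_atE (f : {ffun 'I_k * 'I_n -> S}) (x : 'I_k) (y : 'I_n) :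
  traj_at m0 f x y = f (x, y).
Proof.
rewrite /traj_at; case: insubP => [x' _ ex|]; last by rewrite ltn_ord.
case: insubP => [y' _ ey|]; last by rewrite ltn_ord.
by congr (f (_, _)); apply: val_inj.
Qed.

Lemma memSS (w : Om) (a : 'I_k) (b : 'I_n) : mem w a.+1 b.+1 = w.2 (a, b).
Proof. by rewrite /Defs.mem /= !subn1 /= traj_atE. Qed.

(* [mem w a q] is written by the step of rank [(a - 1) * n + q - 1], or is [m0]. *)
Lemma depends_on_prefix_mem a q m : ((a - 1) * n + q <= m)%N ->
  depends_on_prefix m (fun w => mem w a q).
Proof.
move=> le_m w w' eq1 eq2; rewrite /Defs.mem; case: eqP => [q0|/eqP q0].
  case: ifP => // /negbT a_gt1; apply: traj_at_ext => x y ex ey; apply: eq2.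
  by move: le_m; rewrite /rank /= ex ey q0; have := ltn_ord y; nia.
by apply: traj_at_ext => x y ex ey; apply: eq2; rewrite /rank /= ex ey; nia.
Qed.

Definition step_weight (w : Om) (p : 'I_k * 'I_n) : R :=
  T p.1 p.2 (mem w p.1.+1 p.2) (w.1 p.2) (w.2 p).

(* The law of the first [m] steps, the remaining states being uniform. *)
Definition prefix_law (m : nat) (w : Om) : R :=
  #|S|%:R ^- (k * n - m) * (\prod_(l < n) mu l (w.1 l)) *
  \prod_(p | (rank p < m)%N) step_weight w p.

Lemma prefix_law_ge0 m w : 0 <= prefix_law m w.
Proof.
apply: mulr_ge0; first apply: mulr_ge0; first by rewrite invr_ge0 exprn_ge0.
  by apply: prodr_ge0 => l _; case: (mu_distr l).
apply: prodr_ge0 => p _; rewrite /step_weight.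
by case: (T_kernel p.1 p.2 (mem w p.1.+1 p.2) (w.1 p.2)).
Qed.

Lemma joint_prefix_law w : P w = prefix_law (k * n) w.
Proof.
rewrite /joint /prefix_law subnn expr0 invr1 mul1r; congr (_ * _).
apply: eq_bigl => -[a b]; rewrite /rank /=.
by have := ltn_ord a; have := ltn_ord b; nia.
Qed.

Lemma joint_ge0 w : 0 <= P w.
Proof. by rewrite joint_prefix_law prefix_law_ge0. Qed.

Lemma depends_on_prefix_law m : depends_on_prefix m (prefix_law m).
Proof.
move=> w w' eq1 eq2; rewrite /prefix_law eq1; congr (_ * _); apply: eq_bigr => p lt_pm.
rewrite /step_weight (eq2 p lt_pm) eq1 (depends_on_prefix_mem _ eq1 eq2) //.
by move: lt_pm; rewrite /rank subn1 /=; lia.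
Qed.

Definition update (p : 'I_k * 'I_n) (w : Om) (s : S) : Om :=
  (w.1, [ffun q => if q == p then s else w.2 q]).

Lemma updateK (p : 'I_k * 'I_n) w : update p w (w.2 p) = w.
Proof.
by case: w => w1 w2; congr (_, _); apply/ffunP => q; rewrite ffunE; case: eqP => // ->.
Qed.

Lemma update_update (p : 'I_k * 'I_n) w s s' : update p (update p w s) s' = update p w s'.
Proof. by congr (_, _); apply/ffunP => q; rewrite !ffunE; case: eqP. Qed.

Lemma update_at (p : 'I_k * 'I_n) w s : (update p w s).2 p = s.
Proof. by rewrite ffunE eqxx. Qed.

Lemma sum_update (p : 'I_k * 'I_n) (F : Om -> R) :
  \sum_w \sum_s F (update p w s) = #|S|%:R * \sum_w F w.
Proof.
pose upd (x : Om * S) := (update p x.1 x.2, x.1.2 p).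
have updK : involutive upd.
  by move=> [w s]; rewrite /upd /= update_update updateK update_at.
rewrite pair_bigA /= (reindex_inj (inv_inj updK)) /=.
under eq_bigr do rewrite update_update updateK.
rewrite -(pair_bigA _ (fun w _ => F w)) /= big_distrr /=.
by apply: eq_bigr => w _; rewrite sumr_const mulr_natl.
Qed.

Lemma rank_lt (p : 'I_k * 'I_n) : (rank p < k * n)%N.
Proof. by case: p => a b; rewrite /rank /=; have := ltn_ord a; have := ltn_ord b; nia. Qed.

Lemma prefix_lawS p w :
  prefix_law (rank p).+1 w = #|S|%:R * prefix_law (rank p) w * step_weight w p.
Proof.
rewrite /prefix_law (bigD1 p) ?ltnSn //=.
rewrite (eq_bigl (fun q => rank q < rank p)%N) => [|q]; last first.
  rewrite ltnS leq_eqVlt; case: (eqVneq q p) => [->|/negbTE nqp].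
    by rewrite eqxx andbF ltnn.
  by rewrite (inj_eq rank_inj) nqp andbT.
have -> : (k * n - rank p = (k * n - (rank p).+1).+1)%N by have := rank_lt p; lia.
have S_neq0 : #|S|%:R != 0 :> R by rewrite pnatr_eq0 -lt0n card_S_gt0.
by rewrite exprS invfM; field; rewrite expf_neq0 // S_neq0.
Qed.

Lemma depends_on_prefix_update (TZ : Type) (f : Om -> TZ) p w s :
  depends_on_prefix (rank p) f -> f (update p w s) = f w.
Proof.
move=> f_dep; apply: f_dep => // q lt_qp; rewrite ffunE; case: eqP => // eq_qp.
by rewrite eq_qp ltnn in lt_qp.
Qed.

Lemma sum_prefix_lawS p (g : Om -> R) : depends_on_prefix (rank p) g ->
  \sum_w prefix_law (rank p).+1 w * g w = \sum_w prefix_law (rank p) w * g w.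
Proof.
move=> g_dep; pose F w := T p.1 p.2 (mem w p.1.+1 p.2) (w.1 p.2).
have F_dep : depends_on_prefix (rank p) F.
  move=> w w' eq1 eq2; rewrite /F eq1 (depends_on_prefix_mem _ eq1 eq2) //.
  by rewrite /rank subn1.
transitivity (#|S|%:R * \sum_w prefix_law (rank p) w * g w * F w (w.2 p)).
  rewrite big_distrr; apply: eq_bigr => w _ /=.
  by rewrite prefix_lawS /step_weight -/(F w); ring.
rewrite -(sum_update p); apply: eq_bigr => w _.
under eq_bigr => s _ do rewrite update_at !(depends_on_prefix_update _ _ F_dep,
  depends_on_prefix_update _ _ g_dep, depends_on_prefix_update _ _ (@depends_on_prefix_law _)).
rewrite -big_distrr /=.
by case: (T_kernel p.1 p.2 (mem w p.1.+1 p.2) (w.1 p.2)) => _ ->; rewrite mulr1.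
Qed.

Lemma sum_joint_prefix m (g : Om -> R) : (m <= k * n)%N -> depends_on_prefix m g ->
  \sum_w P w * g w = \sum_w prefix_law m w * g w.
Proof.
move=> le_m; have [d] := ubnPeq (k * n - m)%N; elim: d m le_m => [|d IH] m le_m eq_d g_dep.
  have -> : m = (k * n)%N by lia.
  by apply: eq_bigr => w _; rewrite joint_prefix_law.
have [p eq_pm] := @rank_onto m (ltac:(lia)).
rewrite (IH m.+1) //; try lia; last exact: depends_on_prefixW g_dep.
by rewrite -eq_pm sum_prefix_lawS // eq_pm.
Qed.

Lemma joint_sum1 : \sum_w P w = 1.
Proof.
transitivity (\sum_w P w * 1); first by apply: eq_bigr => w _; rewrite mulr1.
rewrite (@sum_joint_prefix 0) // /prefix_law subn0.
under eq_bigr do rewrite big_pred0 // !mulr1.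
rewrite -big_distrr /=.
rewrite -(pair_bigA _ (fun (x : {ffun 'I_n -> A}) _ => \prod_(l < n) mu l (x l))) /=.
under eq_bigr do rewrite sumr_const card_ffun card_prod !card_ord.
rewrite sumrMnl -bigA_distr_bigA big1 => [|l _]; last by case: (mu_distr l).
by rewrite natrX mulVf // expf_neq0 // pnatr_eq0 -lt0n card_S_gt0.
Qed.

(* [splice l j w1 w2] takes from [w1] the stream elements [X_(l+1), ..., X_(j+1)]
   and, in every pass, the states [M_(i,q)] for [l < q <= j]; the rest from [w2]. *)
Definition splice (l j : nat) (w1 w2 : Om) : Om :=
  ([ffun q : 'I_n => if (l <= q <= j)%N then w1.1 q else w2.1 q],
   [ffun p : 'I_k * 'I_n => if (l <= p.2 < j)%N then w1.2 p else w2.2 p]).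

Lemma spliceK l j w1 w2 : splice l j (splice l j w1 w2) (splice l j w2 w1) = w1.
Proof.
case: w1 => x1 t1; congr (_, _); apply/ffunP => q; rewrite !ffunE.
  by case: (l <= q <= j)%N.
by case: (l <= q.2 < j)%N.
Qed.

Lemma mem_splice l j w1 w2 a q : (j < n)%N ->
  mem (splice l j w1 w2) a q = if (l < q <= j)%N then mem w1 a q else mem w2 a q.
Proof.
move=> lt_jn; rewrite /Defs.mem; case: eqP => [->|/eqP q_neq0] /=.
  case: ifP => // _; apply: traj_at_ext => x y _ ey.
  rewrite ffunE /= ey; have -> : (n - 1 < j)%N = false by lia.
  by rewrite andbF.
case: ifP => q_in; apply: traj_at_ext => x y _ ey; rewrite ffunE /= ey.
  by have -> : (l <= q - 1 < j)%N = true by lia.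
by have -> : (l <= q - 1 < j)%N = false by lia.
Qed.

Definition agree_boundary l j m (w1 w2 : Om) := forall a : nat, (a < k)%N ->
  ((a * n + l < m)%N -> mem w1 a.+1 l = mem w2 a.+1 l) /\
  ((a * n + j < m)%N -> mem w1 a.+1 j.+1 = mem w2 a.+1 j.+1).

Lemma agree_boundary_sym l j m w1 w2 :
  agree_boundary l j m w1 w2 -> agree_boundary l j m w2 w1.
Proof.
move=> agree a lt_ak; have [agree_l agree_j] := agree a lt_ak.
by split=> lt_m; [rewrite agree_l | rewrite agree_j].
Qed.

Lemma step_weight_splice l j m w1 w2 p : (l <= j)%N -> (j < n)%N ->
  agree_boundary l j m w1 w2 -> (rank p < m)%N ->
  step_weight (splice l j w1 w2) p =
    if (l <= p.2 <= j)%N then step_weight w1 p else step_weight w2 p.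
Proof.
move=> le_lj lt_jn agree; case: p => a q lt_m.
rewrite /step_weight /= mem_splice // !ffunE /=.
have [agree_l agree_j] := agree a (ltn_ord a); rewrite /rank /= in lt_m.
case: (boolP (l <= q <= j)%N) => q_in; last first.
  have -> : (l <= q < j)%N = false by lia.
  by have -> : (l < q <= j)%N = false by lia.
have -> : (l <= q < j)%N = (q != j :> nat) by lia.
have -> : (l < q <= j)%N = (q != l :> nat) by lia.
have agree_j' : (q : nat) = j -> w2.2 (a, q) = w1.2 (a, q).
  by move=> qj; rewrite -!memSS qj agree_j // -qj.
have agree_l' : (q : nat) = l -> mem w2 a.+1 q = mem w1 a.+1 q.
  by move=> ql; rewrite ql agree_l // -ql.
by case: (eqVneq (q : nat) j) => [/agree_j' ->|_];
  case: (eqVneq (q : nat) l) => [/agree_l' ->|_].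
Qed.

Lemma prefix_law_splice l j m w1 w2 : (l <= j)%N -> (j < n)%N ->
  agree_boundary l j m w1 w2 ->
  prefix_law m (splice l j w1 w2) * prefix_law m (splice l j w2 w1) =
  prefix_law m w1 * prefix_law m w2.
Proof.
move=> le_lj lt_jn agree12; have agree21 := agree_boundary_sym agree12.
rewrite /prefix_law mulrACA [RHS]mulrACA; congr (_ * _).
  rewrite mulrACA [RHS]mulrACA; congr (_ * _).
  rewrite -!big_split /=; apply: eq_bigr => q _; rewrite !ffunE.
  by case: ifP => _ //; rewrite mulrC.
rewrite -!big_split /=; apply: eq_bigr => p lt_pm.
rewrite (step_weight_splice _ _ agree12) // (step_weight_splice _ _ agree21) //.
by case: ifP => _ //; rewrite mulrC.
Qed.

Lemma cmi_splice_eq0 l j m (TU TV TC : eqType) (U : Om -> TU) (V : Om -> TV)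
    (C : Om -> TC) :
  (l <= j)%N -> (j < n)%N -> (m <= k * n)%N ->
  depends_on_prefix m U -> depends_on_prefix m V -> depends_on_prefix m C ->
  (forall w1 w2, U (splice l j w1 w2) = U w2) ->
  (forall w1 w2, V (splice l j w1 w2) = V w1) ->
  (forall w1 w2, C (splice l j w1 w2) = C w2) ->
  (forall w1 w2, C w1 = C w2 -> agree_boundary l j m w1 w2) ->
  cmi P U V C = 0.
Proof.
move=> le_lj lt_jn le_m U_dep V_dep C_dep U_spl V_spl C_spl C_agree.
rewrite (@cmi_eq_law _ _ _ (prefix_law m)) => [|g g_UVC].
  apply: (cmi_eq0_swap (@prefix_law_ge0 m) (swap := splice l j)) => w1 w2 C12.
  split; [by rewrite C_spl C12 | by [] | by [] | exact: spliceK |].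
  exact: prefix_law_splice (C_agree _ _ C12).
apply: sum_joint_prefix => // w w' eq1 eq2.
by apply: g_UVC; [apply: U_dep | apply: V_dep | apply: C_dep].
Qed.

Definition memEnds (i : nat) (w : Om) : seq S := [seq memEnd w i' | i' <- iota 0 i].

Lemma memUpToS w i q : memUpTo w i.+1 q = rcons (memUpTo w i q) (mem w i.+1 q).
Proof. by rewrite /Defs.memUpTo -(addn1 i) iotaD map_cat add1n addn1 cats1. Qed.

Lemma memEndsS w i : memEnds i.+1 w = rcons (memEnds i w) (memEnd w i).
Proof. by rewrite /memEnds -(addn1 i) iotaD map_cat add0n cats1. Qed.

Lemma memUpTo_inj w1 w2 i q : memUpTo w1 i q = memUpTo w2 i q ->
  forall a, (a < i)%N -> mem w1 a.+1 q = mem w2 a.+1 q.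
Proof.
move=> eq12 a lt_ai; have := congr1 (fun s => nth m0 s a) eq12.
by rewrite !(nth_map 0) ?size_iota // nth_iota // add1n.
Qed.

Lemma memEnds_inj w1 w2 i : memEnds i w1 = memEnds i w2 ->
  forall a, (a < i)%N -> memEnd w1 a = memEnd w2 a.
Proof.
move=> eq12 a lt_ai; have := congr1 (fun s => nth m0 s a) eq12.
by rewrite !(nth_map 0) ?size_iota // nth_iota.
Qed.

Lemma memUpTo0 w : (0 < n)%N -> memUpTo w k 0 = memBefore m0 w.
Proof.
move=> n_gt0; rewrite /Defs.memUpTo /memBefore -[1%N]addn0 iotaDl -map_comp.
apply: eq_map => -[|i] //=; rewrite /Defs.memEnd /Defs.mem /=.
by rewrite (_ : (n == 0)%N = false) ?subSS ?subn0 //; lia.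
Qed.

Lemma depends_on_prefix_stream m (l : 'I_n) : depends_on_prefix m (Xrv l).
Proof. by move=> w w' eq1 _; rewrite /Xrv eq1. Qed.

Lemma depends_on_prefix_memUpTo i q m : (i * n + q <= n + m)%N ->
  depends_on_prefix m (fun w => memUpTo w i q).
Proof.
move=> le_m; apply: depends_on_prefix_map => i'; rewrite mem_iota => i'_in.
by apply: depends_on_prefix_mem; nia.
Qed.

Lemma depends_on_prefix_memEnd i m : (i * n <= m)%N ->
  depends_on_prefix m (fun w => memEnd w i).
Proof.
move=> le_m w w' eq1 eq2; rewrite /Defs.memEnd; case: eqP => // /eqP i_neq0.
by apply: (depends_on_prefix_mem _ eq1 eq2); nia.
Qed.

Lemma depends_on_prefix_memEnds i m : ((i - 1) * n <= m)%N ->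
  depends_on_prefix m (memEnds i).
Proof.
move=> le_m; apply: depends_on_prefix_map => i'; rewrite mem_iota => i'_in.
by apply: depends_on_prefix_memEnd; nia.
Qed.

Ltac solve_prefix_dep := repeat first
  [ apply: depends_on_prefix_pair | apply: depends_on_prefix_stream
  | apply: depends_on_prefix_memUpTo
  | apply: depends_on_prefix_memEnds | apply: depends_on_prefix_memEnd
  | apply: depends_on_prefix_mem ]; try nia.

Definition reads_outside (TZ : Type) l j (f : Om -> TZ) :=
  forall w1 w2, f (splice l j w1 w2) = f w2.

Lemma reads_outside_pair (T1 T2 : Type) l j (f : Om -> T1) (g : Om -> T2) :
  reads_outside l j f -> reads_outside l j g -> reads_outside l j (fun w => (f w, g w)).
Proof. by move=> f_out g_out w1 w2; rewrite f_out g_out. Qed.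

Lemma reads_outside_mem l j a q : (j < n)%N -> ~~ (l < q <= j)%N ->
  reads_outside l j (fun w => mem w a q).
Proof. by move=> lt_jn q_out w1 w2; rewrite mem_splice // (negbTE q_out). Qed.

Lemma reads_outside_memUpTo l j i q : (j < n)%N -> ~~ (l < q <= j)%N ->
  reads_outside l j (fun w => memUpTo w i q).
Proof.
by move=> lt_jn q_out w1 w2; apply/eq_map => i'; apply: reads_outside_mem.
Qed.

Lemma reads_outside_memEnd l j i : (j < n)%N -> reads_outside l j (fun w => memEnd w i).
Proof.
move=> lt_jn w1 w2; rewrite /Defs.memEnd; case: eqP => // _.
by apply: reads_outside_mem => //; lia.
Qed.

Lemma reads_outside_memEnds l j i : (j < n)%N -> reads_outside l j (memEnds i).
Proof.
by move=> lt_jn w1 w2; apply/eq_map => i'; apply: reads_outside_memEnd.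
Qed.

Lemma stream_splice l j (l' : 'I_n) w1 w2 : (l <= l' <= j)%N ->
  Xrv l' (splice l j w1 w2) = Xrv l' w1.
Proof. by move=> l'_in; rewrite /Xrv ffunE l'_in. Qed.

Ltac solve_reads_outside := repeat first
  [ apply: reads_outside_pair | apply: reads_outside_memEnds
  | apply: reads_outside_memEnd | apply: reads_outside_memUpTo
  | apply: reads_outside_mem ]; rewrite ?ltnn //; try lia.

Section PassChain.
Variables (j : nat) (l : 'I_n).
Hypotheses (le_lj : (l <= j)%N) (lt_jn : (j < n)%N).

Local Notation X := (Xrv l).

Definition pass_term i := cmi P (fun w => mem w i.+1 j.+1) X
  (fun w => (memUpTo w i.+1 l, memUpTo w i j.+1)).

Definition passes_view i w := (memUpTo w i j.+1, memEnds i w, memUpTo w i l).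

Lemma X_splice w1 w2 : X (splice l j w1 w2) = X w1.
Proof. by apply: stream_splice; rewrite leqnn le_lj. Qed.

Ltac splice_side_conditions :=
  try nia; try solve [by solve_prefix_dep | by solve_reads_outside | exact: X_splice].

Lemma cmi_pass_start_eq0 i : (i < k)%N ->
  cmi P (fun w => (memEnd w i, mem w i.+1 l)) X (fun w => (tt, passes_view i w)) = 0.
Proof.
move=> lt_ik; apply: (@cmi_splice_eq0 l j (i * n + l)) => //; splice_side_conditions.
move=> w1 w2 [eq_J _ eq_l] a lt_ak.
by split=> lt_m; [apply: (memUpTo_inj eq_l) | apply: (memUpTo_inj eq_J)]; nia.
Qed.

Lemma cmi_pass_term_cond i : (i < k)%N ->
  cmi P (fun w => mem w i.+1 j.+1) X
    (fun w => ((memUpTo w i.+1 l, memUpTo w i j.+1), memEnds i.+1 w)) = pass_term i.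
Proof.
move=> lt_ik; apply: (cmi_drop_cond joint_ge0).
- apply: (@cmi_splice_eq0 l j (i * n + l)) => //; splice_side_conditions.
  move=> w1 w2 /pair_equal_spec[eq_l eq_J] a lt_ak.
  by split=> lt_m; [apply: (memUpTo_inj eq_l) | apply: (memUpTo_inj eq_J)]; nia.
- apply: (@cmi_splice_eq0 l j (i * n + j.+1)) => //; splice_side_conditions.
  move=> w1 w2 /pair_equal_spec[/pair_equal_spec[eq_l eq_J] eq_Jn] a lt_ak.
  split=> lt_m.
    by apply: (memUpTo_inj eq_l); nia.
  have [lt_ai|->] : (a < i)%N \/ a = i by nia.
    exact: (memUpTo_inj eq_J).
  exact: eq_Jn.
Qed.

Lemma cmi_passes_view i : (i <= k)%N ->
  cmi P (passes_view i) X (fun=> tt) = \sum_(i' < i) pass_term i'.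
Proof.
elim: i => [|i IH] le_ik.
  by rewrite big_ord0; apply: (cmi_const_eq0 joint_ge0).
rewrite big_ord_recr /= -IH; last by lia.
have -> : cmi P (passes_view i.+1) X (fun=> tt) =
    cmi P (fun w => ((passes_view i w, (memEnd w i, mem w i.+1 l)), mem w i.+1 j.+1))
      X (fun=> tt).
  apply: (cmi_same_info joint_ge0) => //.
  by move=> w w'; rewrite /passes_view !memUpToS !memEndsS; case_eqs.
rewrite (cmi_chainl joint_ge0) (cmi_chainl joint_ge0 (passes_view i)).
rewrite cmi_pass_start_eq0 // addr0; congr (_ + _).
rewrite -cmi_pass_term_cond //; apply: (cmi_same_info joint_ge0) => // w w'.
by rewrite /passes_view !memUpToS !memEndsS; case_eqs.
Qed.

Lemma cmi_cond_le_sum_pass_term :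
  cmi P (fun w => memUpTo w k j.+1) X (fun w => (memBefore m0 w, memUpTo w k l)) <=
  \sum_(i < k) pass_term i.
Proof.
rewrite -cmi_passes_view //.
have -> : cmi P (passes_view k) X (fun=> tt) =
    cmi P (fun w => ((memBefore m0 w, memUpTo w k l), memUpTo w k j.+1)) X (fun=> tt).
  by apply: (cmi_same_info joint_ge0) => // w w'; case_eqs.
rewrite (cmi_chainl joint_ge0) -[leLHS]add0r lerD ?(cmi_ge0 joint_ge0) //.
Qed.

End PassChain.

Definition stream_at (w : Om) (q : nat) : option A := omap w.1 (insub q).

Lemma stream_at_ord w (l : 'I_n) : stream_at w l = Some (Xrv l w).
Proof. by rewrite /stream_at valK. Qed.

Definition history (L : nat) (w : Om) :=
  [seq (stream_at w q, memUpTo w k q.+1) | q <- iota 0 L].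

Definition step_view (l : 'I_n) (w : Om) := (Xrv l w, memUpTo w k l.+1).

Lemma historyS L w :
  history L.+1 w = rcons (history L w) (stream_at w L, memUpTo w k L.+1).
Proof. by rewrite /history -(addn1 L) iotaD map_cat add0n cats1 addn1. Qed.

Lemma depends_on_prefix_history L m : (k * n + L <= n + m)%N ->
  depends_on_prefix m (history L).
Proof.
move=> le_m; apply: depends_on_prefix_map => q; rewrite mem_iota => q_in.
apply: depends_on_prefix_pair; last by solve_prefix_dep.
by move=> w w' eq1 _; rewrite /stream_at eq1.
Qed.

Lemma reads_outside_history l j L : (j < n)%N -> (L <= l)%N ->
  reads_outside l j (history L).
Proof.
move=> lt_jn le_Ll w1 w2; apply/eq_in_map => q; rewrite mem_iota => q_in.
congr (_, _); last by apply: reads_outside_memUpTo => //; lia.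
rewrite /stream_at; case: insubP => //= q' _ eq_q; rewrite ffunE.
by have -> : (l <= q' <= j)%N = false by lia.
Qed.

Lemma history_memUpTo (l : 'I_n) w w' :
  memBefore m0 w' = memBefore m0 w -> history l w' = history l w ->
  memUpTo w' k l = memUpTo w k l.
Proof.
have n_gt0 : (0 < n)%N by apply: leq_ltn_trans (ltn_ord l).
have [-> eq_E _|l_gt0 _] := posnP l; first by rewrite !memUpTo0.
rewrite -(prednK l_gt0) !historyS => /eqP.
by rewrite eqseq_rcons xpair_eqE => /andP[_ /andP[_ /eqP]].
Qed.

Section HistoryChain.
Variable j : nat.
Hypothesis lt_jn : (j < n)%N.

Local Notation MJ := (fun w => memUpTo w k j.+1).
Local Notation E := (fun w => memBefore m0 w).

Lemma cmi_history L : (L <= n)%N ->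
  cmi P MJ (history L) E =
  \sum_(l < n | (l < L)%N) cmi P MJ (step_view l) (fun w => (E w, history l w)).
Proof.
elim: L => [|L IH] le_Ln.
  rewrite big_pred0 // (cmiC joint_ge0); exact: (cmi_const_eq0 joint_ge0).
have lt_Ln : (L < n)%N by lia.
rewrite (bigD1 (Ordinal lt_Ln)) //= addrC.
rewrite (eq_bigl (fun l : 'I_n => (l < L)%N)) => [|l]; last first.
  rewrite ltnS leq_eqVlt -val_eqE /=.
  by case: (eqVneq (l : nat) L) => [->|_]; rewrite ?ltnn ?andbF ?andbT.
rewrite -IH 1?ltnW // -(cmi_chainr joint_ge0).
apply: (cmi_same_info joint_ge0) => // w w'.
by rewrite !historyS !(stream_at_ord _ (Ordinal lt_Ln)) /step_view /=; case_eqs.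
Qed.

Lemma cmi_history_stream_eq0 (l : 'I_n) :
  cmi P (history l) (Xrv l) (fun w => (E w, memUpTo w k l)) = 0.
Proof.
have lt_ln := ltn_ord l.
apply: (@cmi_splice_eq0 l (n - 1) (k * n - 1)); try lia.
- by apply: depends_on_prefix_history; nia.
- exact: depends_on_prefix_stream.
- by apply: depends_on_prefix_pair; [apply: depends_on_prefix_memEnds | solve_prefix_dep]; nia.
- by apply: reads_outside_history; lia.
- by move=> w1 w2; apply: stream_splice; lia.
- by apply: reads_outside_pair; [apply: reads_outside_memEnds; lia | solve_reads_outside].
move=> w1 w2 /pair_equal_spec[eq_E eq_l] a lt_ak; split=> lt_m.
  exact: (memUpTo_inj eq_l).
have lt_a1k : (a.+1 < k)%N by nia.
rewrite (_ : (n - 1).+1 = n); last lia.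
exact: (memEnds_inj eq_E lt_a1k).
Qed.

Lemma cmi_stream_le_step (l : 'I_n) :
  cmi P MJ (Xrv l) (fun w => (E w, memUpTo w k l)) <=
  cmi P MJ (step_view l) (fun w => (E w, history l w)).
Proof.
apply: le_trans (cmi_le_condl joint_ge0 _ (cmi_history_stream_eq0 l)) _.
have -> : cmi P MJ (Xrv l) (fun w => ((E w, memUpTo w k l), history l w)) =
    cmi P MJ (Xrv l) (fun w => (E w, history l w)).
  apply: (cmi_same_info joint_ge0) => // w w'; rewrite !xpair_eqE.
  have [eq_E|] := eqVneq (memBefore m0 w') (memBefore m0 w); last by [].
  have [eq_H|] := eqVneq (history l w') (history l w); last by rewrite !andbF.
  by rewrite (history_memUpTo eq_E eq_H) eqxx.
exact: (cmi_le_pairr joint_ge0).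
Qed.

Lemma sum_cmi_stream_le s : (#|S| <= 2 ^ s)%N ->
  \sum_(l < n | (l <= j)%N) cmi P MJ (Xrv l) (fun w => (E w, memUpTo w k l)) <=
  (k * s)%:R.
Proof.
move=> card_S.
apply: (@le_trans _ _
  (\sum_(l < n | (l < j.+1)%N) cmi P MJ (step_view l) (fun w => (E w, history l w)))).
  by apply: ler_sum => l _; apply: cmi_stream_le_step.
rewrite -cmi_history //.
apply: le_trans (cmi_le_entropy joint_ge0 _ _ _ joint_sum1) _.
rewrite (@entropy_same_info _ _ P _ _ MJ (fun w => [ffun a : 'I_k => mem w a.+1 j.+1]));
  last first.
  move=> w w'; apply/eqP/eqP => [eq_MJ|eq_f].
    by apply/ffunP => a; rewrite !ffunE; apply: (memUpTo_inj eq_MJ).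
  apply/eq_in_map => i; rewrite mem_iota => /andP[i_gt0 i_le].
  have lt_ik : (i.-1 < k)%N by lia.
  have := congr1 (fun f : {ffun 'I_k -> S} => f (Ordinal lt_ik)) eq_f.
  by rewrite !ffunE /= prednK.
apply: le_trans (entropy_le_log2_card joint_ge0 _ joint_sum1) _.
rewrite card_ffun card_ord -[(k * s)%N]mulnC -[X in _ <= X]log2_exp2.
rewrite ler_log2 ?ltr0n ?expn_gt0 ?card_S_gt0 //.
rewrite ler_nat expnM; have [->|k_gt0] := posnP k; first by rewrite !expn0.
by rewrite leq_exp2r.
Qed.

End HistoryChain.

End Streaming.

Theorem lemma3p5 (R : realType) (A S : finType) (k n : nat) (m0 : S)
    (mu : 'I_n -> A -> R) (T : 'I_k -> 'I_n -> S -> A -> S -> R) :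
  (0 < k)%N ->
  (forall l, is_distr (mu l)) ->
  (forall i j, is_kernel (T i j)) ->
  [/\ MIC m0 mu T >= MIC_first m0 mu T,
      MIC_first m0 mu T >= MIC_cond m0 mu T
    & forall s : nat, (#|S| <= 2 ^ s)%N ->
        MIC_cond m0 mu T <= (k * s * n)%:R].
Proof.
move=> _ mu_distr T_kernel; have P_ge0 := joint_ge0 m0 mu_distr T_kernel.
split.
- rewrite /MIC lerDl; do 3!(apply: sumr_ge0 => ? _); exact: cmi_ge0.
- rewrite /MIC_cond /MIC_first [leRHS]exchange_big; apply: ler_sum => j _.
  rewrite [leRHS]exchange_big; apply: ler_sum => l le_lj.
  exact: cmi_cond_le_sum_pass_term.
move=> s card_S; rewrite natrM mulr_natr -[n in _ *+ n]card_ord -sumr_const.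
by apply: ler_sum => j _; apply: sum_cmi_stream_le.
Qed.
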